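(* Let $V$ be a Lie superalgebra over $k$ such that for every ideal $W$ of $V$ the centre $Z(W)=\{w\in W:[w,W]=0\}$ is zero. Let $\mathcal A=\mathrm{Curr}(V)$. Then $\sigma(V)\subseteq V$ for every automorphism $\sigma$ of the $k$-conformal superalgebra $\mathcal A$ (where $V$ is identified with $1\otimes V\subseteq\mathcal A$).
   Context: Let $k$ be a field of characteristic $0$. A $k$-conformal superalgebra is a $\mathbb Z/2\mathbb Z$-graded $k$-space $\mathcal A$ with an even linear map $\partial_{\mathcal A}$ and bilinear products $a_{(n)}b$ ($n\in\mathbb Z_+$) with $a_{(n)}b=0$ for $n\gg0$, $(\partial_{\mathcal A}a)_{(n)}b=-na_{(n-1)}b$, $a_{(n)}\partial_{\mathcal A}b=\partial_{\mathcal A}(a_{(n)}b)+na_{(n-1)}b$; an automorphism is a bijective even linear map preserving all $n$-products and commuting with $\partial_{\mathcal A}$. The current conformal superalgebra of a Lie superalgebra $V$ is $\mathrm{Curr}(V)=k[\partial]\otimes_kV$, with $\partial_{\mathcal A}$ acting by multiplication by $\partial$, grading from $V$, and $n$-products determined by $v_{(0)}w=[v,w]$ and $v_{(n)}w=0$ for $n\ge1$ ($v,w\in V$), extended to all of $k[\partial]\otimes V$ via the axiom (CS1) above (equivalently $\lambda$-bracket $[p(\partial)v_\lambda q(\partial)w]=p(-\lambda)q(\partial+\lambda)[v,w]$). *)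

From HB Require Import structures.
From mathcomp Require Import all_boot all_order all_algebra.
Set Implicit Arguments. Unset Strict Implicit. Unset Printing Implicit Defensive.
Import GRing.Theory.
Local Open Scope ring_scope.

Section LieSuper.
Variables (K : fieldType) (V : lmodType K).

(* Z/2-grading of V given by the (linear, idempotent) projection pi0 onto V_0
   along V_1; parity [false] = even, [true] = odd. *)
Definition homog (pi0 : V -> V) (b : bool) (x : V) : Prop :=
  pi0 x = (if b then 0 else x).

Definition sgn (b : bool) : K := (-1) ^+ b.

Record is_lie_superalgebra (pi0 : V -> V) (br : V -> V -> V) : Prop := {
  pi0_lin : forall (a : K) x y, pi0 (a *: x + y) = a *: pi0 x + pi0 y;
  pi0_idem : forall x, pi0 (pi0 x) = pi0 x;
  br_linl : forall (a : K) x y z, br (a *: x + y) z = a *: br x z + br y z;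
  br_linr : forall (a : K) x y z, br z (a *: x + y) = a *: br z x + br z y;
  br_homog : forall i j x y, homog pi0 i x -> homog pi0 j y ->
     homog pi0 (i (+) j) (br x y);
  br_skew : forall i j x y, homog pi0 i x -> homog pi0 j y ->
     br x y = - (sgn (i && j) *: br y x);
  br_jacobi : forall i j x y z, homog pi0 i x -> homog pi0 j y ->
     br x (br y z) = br (br x y) z + sgn (i && j) *: br y (br x z)
}.

Definition is_ideal (pi0 : V -> V) (br : V -> V -> V) (W : V -> Prop) : Prop :=
  [/\ W 0, (forall (a : K) x y, W x -> W y -> W (a *: x + y)),
      (forall x, W x -> W (pi0 x)) & (forall v w, W w -> W (br v w))].

Definition centre_trivial (br : V -> V -> V) (W : V -> Prop) : Prop :=
  forall w, W w -> (forall w', W w' -> br w w' = 0) -> w = 0.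

(* ---- The current conformal superalgebra Curr(V) = k[d] (x) V.
   An element sum_m d^m (x) f m is encoded by its finitely supported
   coefficient function f : nat -> V. *)
Definition finsupp (f : nat -> V) : Prop :=
  exists N, forall m, (N <= m)%N -> f m = 0.

Definition cemb (v : V) : nat -> V := fun m => if m is 0 then v else 0.

Definition cder (f : nat -> V) : nat -> V :=
  fun m => if m is m'.+1 then f m' else 0.

Definition chomog (pi0 : V -> V) (b : bool) (f : nat -> V) : Prop :=
  forall m, homog pi0 b (f m).

(* n-th product: from [d^i a _lambda d^j b] = (-lambda)^i (d+lambda)^j [a,b]
   and [a_lambda b] = sum_n lambda^n/n! a_(n) b one gets
   (d^i a)_(n) (d^j b) = n! (-1)^i C(j, n-i) d^(i+j-n) [a,b]  (i <= n). *)
Definition cprod (br : V -> V -> V) (n : nat) (f g : nat -> V) : nat -> V :=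
  fun m => \sum_(i < n.+1)
    ((-1) ^+ i * ((n`! * 'C(m + n - i, n - i))%N)%:R) *: br (f i) (g (m + n - i)%N).

(* sigma (restricted to finitely supported functions, i.e. to Curr(V)) is an
   automorphism of the conformal superalgebra Curr(V). *)
Record curr_aut (pi0 : V -> V) (br : V -> V -> V)
    (sigma : (nat -> V) -> (nat -> V)) : Prop := {
  aut_supp : forall f, finsupp f -> finsupp (sigma f);
  aut_lin : forall (a : K) f g, finsupp f -> finsupp g ->
     sigma (fun m => a *: f m + g m) = (fun m => a *: sigma f m + sigma g m);
  aut_inj : forall f g, finsupp f -> finsupp g -> sigma f = sigma g -> f = g;
  aut_surj : forall g, finsupp g -> exists2 f, finsupp f & sigma f = g;
  aut_even : forall b f, finsupp f -> chomog pi0 b f -> chomog pi0 b (sigma f);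
  aut_der : forall f, finsupp f -> sigma (cder f) = cder (sigma f);
  aut_prod : forall n f g, finsupp f -> finsupp g ->
     sigma (cprod br n f g) = cprod br n (sigma f) (sigma g)
}.

End LieSuper.

From HB Require Import structures.
From mathcomp Require Import all_boot all_order all_algebra.
From Stdlib Require Import FunctionalExtensionality.
Set Implicit Arguments. Unset Strict Implicit. Unset Printing Implicit Defensive.
Import GRing.Theory.
Local Open Scope ring_scope.

(* Write  img x := sigma (1 (x) x),  a finitely supported function nat -> V
   whose m-th coefficient is the d^m-component.  Since 1 (x) V is stable under
   the 0-product and killed by the higher products, the same holds for the
   images: img [x,y] = img x _(0) img y and  img x _(n+1) img y = 0.
   Surjectivity of sigma together with sigma d = d sigma shows that every v in V
   is the constant coefficient of some img x.
   Now fix d >= 1 and let W_d be the set of top coefficients img x (d) of those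
   img x supported in degrees <= d.  By the facts above W_d is an ideal of V,
   and evaluating the vanishing 2d-product img x _(2d) img y at degree 0
   leaves only the term (-1)^d (2d)! [x_d, y_d]; as char k = 0 this forces
   W_d to be abelian.  Having zero centre, W_d = 0, so every img x supported in
   degrees <= d is supported in degrees <= d-1.  Descending induction from the
   finite support of img v shows img v is constant, i.e. lies in 1 (x) V. *)

Lemma semilinear_map0 (K : pzRingType) (U W : lmodType K) (f : U -> W) :
  (forall (a : K) x y, f (a *: x + y) = a *: f x + f y) -> f 0 = 0.
Proof.
move=> f_lin; have := f_lin 1 0 0; rewrite scale1r addr0 => f0_twice.
by apply: (@addrI _ (f 0)); rewrite addr0 {3}f0_twice scale1r.
Qed.

Lemma sign_fact_neq0 (K : fieldType) (k n : nat) :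
  [pchar K] =i pred0 -> ((-1) ^+ k * (n`!)%:R : K) != 0.
Proof.
move=> /pcharf0P charK0.
by rewrite mulf_neq0 ?signr_eq0 // charK0 -lt0n fact_gt0.
Qed.

Section CurrentAlgebra.
Variables (K : fieldType) (V : lmodType K) (pi0 : V -> V) (br : V -> V -> V).
Hypothesis hV : is_lie_superalgebra pi0 br.

Lemma br0r z : br z 0 = 0.
Proof.
exact: (semilinear_map0 (f := fun x => br z x)) (fun a x y => br_linr hV a x y z).
Qed.

Lemma br0l z : br 0 z = 0.
Proof.
exact: (semilinear_map0 (f := fun x => br x z)) (fun a x y => br_linl hV a x y z).
Qed.

Lemma pi0_0 : pi0 0 = 0.
Proof. exact: semilinear_map0 (pi0_lin hV). Qed.

Lemma finsupp0 : finsupp (fun _ : nat => (0 : V)).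
Proof. by exists 0%N. Qed.

Lemma finsupp_cemb (x : V) : finsupp (cemb x).
Proof. by exists 1%N; case. Qed.

Definition ctail (f : nat -> V) : nat -> V := fun m => f m.+1.

Lemma finsupp_ctail (f : nat -> V) : finsupp f -> finsupp (ctail f).
Proof. by case=> N HN; exists N => m Hm; apply: HN; apply: leqW. Qed.

Lemma finsupp_cder (f : nat -> V) : finsupp f -> finsupp (cder f).
Proof. by case=> N HN; exists N.+1; case => // m Hm; apply: HN. Qed.

Lemma curr_decomp (f : nat -> V) :
  f = fun m => 1 *: cemb (f 0%N) m + cder (ctail f) m.
Proof.
by apply: functional_extensionality; case => [|m] /=; rewrite scale1r ?addr0 ?add0r.
Qed.

Lemma cemb0 : cemb (0 : V) = fun _ => 0.
Proof. by apply: functional_extensionality; case. Qed.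

Lemma cemb_lin (a : K) (x y : V) :
  cemb (a *: x + y) = fun m => a *: cemb x m + cemb y m.
Proof. by apply: functional_extensionality; case => //= m; rewrite scaler0 addr0. Qed.

Lemma cprod0E (f g : nat -> V) m : cprod br 0 f g m = br (f 0%N) (g m).
Proof.
by rewrite /cprod big_ord1 /= expr0 mul1r fact0 addn0 subn0 bin0 scale1r.
Qed.

Lemma cprod0_cemb x y : cprod br 0 (cemb x) (cemb y) = cemb (br x y).
Proof.
by apply: functional_extensionality => -[|m]; rewrite cprod0E //= br0r.
Qed.

Lemma cprodS_cemb n x y : cprod br n.+1 (cemb x) (cemb y) = fun _ => 0.
Proof.
apply: functional_extensionality => m; apply: big1 => -[[|i] _] _ /=.
  by rewrite subn0 addnS br0r scaler0.
by rewrite br0l scaler0.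
Qed.

Definition bounded (d : nat) (g : nat -> V) : Prop :=
  forall m, (d < m)%N -> g m = 0.

Lemma cprod_top_coef d (f g : nat -> V) : bounded d f -> bounded d g ->
  cprod br (d + d) f g 0%N = ((-1) ^+ d * ((d + d)`!)%:R) *: br (f d) (g d).
Proof.
move=> bf bg; have top : (d < (d + d).+1)%N by rewrite ltnS leq_addl.
rewrite /cprod add0n (bigD1 (Ordinal top)) //= big1 ?addr0; last first.
  move=> [i Hi] /= /negbTE; rewrite -val_eqE /= => ne.
  have [lt|gt|eq] := ltngtP i d; last by rewrite eq eqxx in ne.
  - by rewrite bg ?br0r ?scaler0 // ltn_subRL ltn_add2r.
  - by rewrite bf ?br0l ?scaler0.
by rewrite addnK binn muln1.
Qed.

End CurrentAlgebra.

Section Automorphism.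
Variables (K : fieldType) (V : lmodType K) (pi0 : V -> V) (br : V -> V -> V).
Hypothesis hV : is_lie_superalgebra pi0 br.
Variable sigma : (nat -> V) -> (nat -> V).
Hypothesis hs : curr_aut pi0 br sigma.

Definition img (x : V) : nat -> V := sigma (cemb x).

Lemma sigma0 : sigma (fun _ => 0) = fun _ => 0.
Proof.
have := aut_lin hs 1 (finsupp0 V) (finsupp0 V).
have -> : (fun m : nat => 1 *: (0 : V) + 0) = fun _ => 0.
  by apply: functional_extensionality => m; rewrite scale1r addr0.
set z := sigma _ => e; apply: functional_extensionality => m.
have twice : z m = z m + z m by rewrite {1}e /= scale1r.
by apply: (@addrI _ (z m)); rewrite addr0 -twice.
Qed.

Lemma img0 m : img 0 m = 0.
Proof. by rewrite /img cemb0 sigma0. Qed.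

Lemma img_lin (a : K) x y m : img (a *: x + y) m = a *: img x m + img y m.
Proof.
by rewrite /img cemb_lin (aut_lin hs a (finsupp_cemb x) (finsupp_cemb y)).
Qed.

(* sigma is even, hence commutes with the projection onto V_0. *)
Lemma img_pi0 x m : pi0 (img x m) = img (pi0 x) m.
Proof.
have ex : x = 1 *: pi0 x + ((-1) *: pi0 x + x).
  by rewrite scale1r scaleN1r addrA addrN add0r.
rewrite {1}ex img_lin (pi0_lin hV) scale1r.
have even : pi0 (img (pi0 x) m) = img (pi0 x) m.
  apply: (aut_even hs (b := false) (finsupp_cemb (pi0 x))).
  by case => [|k]; rewrite /homog /= ?(pi0_0 hV) ?(pi0_idem hV).
have odd : pi0 (img ((-1) *: pi0 x + x) m) = 0.
  apply: (aut_even hs (b := true) (finsupp_cemb _)).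
  case => [|k]; rewrite /homog /= ?(pi0_0 hV) //.
  by rewrite (pi0_lin hV) (pi0_idem hV) scaleN1r addNr.
by rewrite even odd addr0.
Qed.

Lemma img_br x y m : img (br x y) m = br (img x 0%N) (img y m).
Proof.
rewrite /img -(cprod0_cemb hV) (aut_prod hs 0 (finsupp_cemb x) (finsupp_cemb y)).
exact: cprod0E.
Qed.

Lemma img_cprodS n x y : cprod br n.+1 (img x) (img y) = fun _ => 0.
Proof.
rewrite /img -(aut_prod hs n.+1 (finsupp_cemb x) (finsupp_cemb y)).
by rewrite (cprodS_cemb hV) sigma0.
Qed.

(* Every v in V is the constant coefficient of some img x: write a preimage
   of 1 (x) v as 1 (x) f 0 + d (tail) and use sigma d = d sigma. *)
Lemma img_onto v : exists x, img x 0%N = v.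
Proof.
have [f ff fe] := aut_surj hs (finsupp_cemb v).
exists (f 0%N); have := congr1 (fun g => g 0%N) fe.
rewrite {1}(curr_decomp f).
rewrite (aut_lin hs 1 (finsupp_cemb _) (finsupp_cder (finsupp_ctail ff))).
by rewrite (aut_der hs (finsupp_ctail ff)) /= scale1r addr0.
Qed.

Definition top_layer (d : nat) (z : V) : Prop :=
  exists x, bounded d (img x) /\ z = img x d.

Lemma top_layer_ideal d : is_ideal pi0 br (top_layer d).
Proof.
split.
- by exists 0; split => [m _|]; rewrite img0.
- move=> a z z' [x [bx ->]] [y [bz ->]]; exists (a *: x + y); split.
    by move=> m hm; rewrite img_lin bx // bz // scaler0 addr0.
  by rewrite img_lin.
- move=> z [x [bx ->]]; exists (pi0 x); split; last by rewrite img_pi0.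
  by move=> m hm; rewrite -img_pi0 bx // (pi0_0 hV).
- move=> v z [x [bx ->]]; have [y <-] := img_onto v.
  exists (br y x); split; last by rewrite img_br.
  by move=> m hm; rewrite img_br bx // (br0r hV).
Qed.

(* For d >= 1, W_d is abelian: its brackets are killed by the 2d-product. *)
Lemma top_layer_abelian (hK : [pchar K] =i pred0) d z z' :
  top_layer d.+1 z -> top_layer d.+1 z' -> br z z' = 0.
Proof.
move=> [x [bx ->]] [y [byy ->]].
have := congr1 (fun g => g 0%N) (img_cprodS (d + d.+1) x y).
rewrite /= -addSn (cprod_top_coef hV bx byy) => /eqP.
by rewrite scaler_eq0 (negbTE (sign_fact_neq0 _ _ hK)) => /eqP.
Qed.

Lemma bounded_img_const (hK : [pchar K] =i pred0)
    (hZ : forall W : V -> Prop, is_ideal pi0 br W -> centre_trivial br W) d x :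
  bounded d (img x) -> bounded 0 (img x).
Proof.
elim: d x => [|d IH] x bx //; apply: IH => m hm.
have [->|ne] := eqVneq m d.+1; last by apply: bx; rewrite ltn_neqAle eq_sym ne hm.
apply: (hZ _ (top_layer_ideal d.+1)); first by exists x.
by move=> w' hw'; apply: (top_layer_abelian hK _ hw'); exists x.
Qed.

End Automorphism.

Theorem mainTheorem12 (K : fieldType) (hK : [pchar K] =i pred0)
  (V : lmodType K) (pi0 : V -> V) (br : V -> V -> V)
  (hV : is_lie_superalgebra pi0 br)
  (hZ : forall W : V -> Prop, is_ideal pi0 br W -> centre_trivial br W)
  (sigma : (nat -> V) -> (nat -> V)) (hs : curr_aut pi0 br sigma) :
  forall v : V, exists w : V, sigma (cemb v) = cemb w.
Proof.
move=> v; exists (img sigma v 0%N).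
have [N HN] := aut_supp hs (finsupp_cemb v).
have const : bounded 0 (img sigma v).
  by apply: (bounded_img_const hV hs hK hZ (d := N)) => m /ltnW; apply: HN.
by apply: functional_extensionality => -[|m] //; exact: const.
Qed.
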